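(* Let $G$ be a finitely generated amenable group, and let $F=(F_n)_{n=1}^\infty$ be a sequence of finite subsets of $G$ that is both a left- and a right-Følner sequence. Then $\textup{cr}_F(G)=\textup{dc}_F(G)$.
   Context: $F$ is left-Følner if $|xF_n\triangle F_n|/|F_n|\to0$ for every $x\in G$, right-Følner if $|F_nx\triangle F_n|/|F_n|\to0$ for every $x\in G$. Writing $\mathcal{C}(G)$ for the set of conjugacy classes of $G$, $\textup{cr}_F(G)=\limsup_{n\to\infty}\frac{|\{C\in\mathcal{C}(G):C\cap F_n\ne\varnothing\}|}{|F_n|}$. $\textup{dc}_F(G)=\limsup_{n\to\infty}(\mu_n\times\mu_n)(\{(x,y):xy=yx\})$, where $\mu_n$ is the uniform probability measure on $F_n$. *)

From HB Require Import structures.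
From mathcomp Require Import all_boot all_order all_algebra finmap.
From mathcomp Require Import all_classical all_reals all_analysis.
Set Implicit Arguments. Unset Strict Implicit. Unset Printing Implicit Defensive.
Import Order.TTheory GRing.Theory Num.Theory.
Local Open Scope ring_scope.
Local Open Scope fset_scope.
Local Open Scope classical_set_scope.

Definition is_group (G : Type) (mul : G -> G -> G) (inv : G -> G) (e : G) :=
  [/\ associative mul, left_id e mul & left_inverse e inv mul].

Inductive generated (G : eqType) (mul : G -> G -> G) (inv : G -> G) (e : G)
    (S : seq G) : G -> Prop :=
  | gen_one : generated mul inv e S e
  | gen_elt x : x \in S -> generated mul inv e S x
  | gen_inv x : generated mul inv e S x -> generated mul inv e S (inv x)
  | gen_mul x y : generated mul inv e S x -> generated mul inv e S y ->
                  generated mul inv e S (mul x y).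

Definition finitely_generated (G : eqType) (mul : G -> G -> G) (inv : G -> G)
    (e : G) := exists S : seq G, forall x, generated mul inv e S x.

Definition symdiff (G : choiceType) (A B : {fset G}) : {fset G} :=
  ((A `\` B) `|` (B `\` A))%fset.

Definition left_Folner (R : realType) (G : choiceType) (mul : G -> G -> G)
    (F : nat -> {fset G}) :=
  forall x : G,
    let u : R^nat := fun n =>
      (#|` symdiff [fset mul x y | y in F n]%fset (F n)|)%:R / (#|` F n|)%:R in
    u @ \oo --> 0.

Definition right_Folner (R : realType) (G : choiceType) (mul : G -> G -> G)
    (F : nat -> {fset G}) :=
  forall x : G,
    let u : R^nat := fun n =>
      (#|` symdiff [fset mul y x | y in F n]%fset (F n)|)%:R / (#|` F n|)%:R in
    u @ \oo --> 0.

(* Amenability of a countable (e.g. finitely generated) discrete group: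
   existence of a left Følner sequence of nonempty finite sets. *)
Definition amenable (R : realType) (G : choiceType) (mul : G -> G -> G) :=
  exists F : nat -> {fset G}, (forall n, F n != fset0) /\ left_Folner R mul F.

Definition conj_class (G : Type) (mul : G -> G -> G) (inv : G -> G) (x : G)
  : set G := [set mul (mul g x) (inv g) | g in setT]%classic.

(* cr_F(G) = limsup |{C in C(G) : C meets F_n}| / |F_n|.  The conjugacy
   classes meeting F_n are exactly the classes of the elements of F_n. *)
Definition cr (R : realType) (G : choiceType) (mul : G -> G -> G)
    (inv : G -> G) (F : nat -> {fset G}) : R :=
  limn_sup (fun n => (#|` [fset conj_class mul inv x | x in F n]%fset|)%:R
                     / (#|` F n|)%:R).

(* dc_F(G) = limsup (mu_n x mu_n)({(x,y) : xy = yx}), mu_n uniform on F_n *)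
Definition dc (R : realType) (G : choiceType) (mul : G -> G -> G)
    (F : nat -> {fset G}) : R :=
  limn_sup (fun n =>
    (#|` [fset p in (F n `*` F n)%fset | mul p.1 p.2 == mul p.2 p.1]%fset|)%:R
    / ((#|` F n|)%:R * (#|` F n|)%:R)).

From HB Require Import structures.
From mathcomp Require Import all_boot all_order all_algebra finmap.
From mathcomp Require Import all_classical all_reals all_analysis.
From mathcomp Require Import lra.
Set Implicit Arguments. Unset Strict Implicit. Unset Printing Implicit Defensive.
Import Order.TTheory GRing.Theory Num.Theory.
Local Open Scope fset_scope.

(** Fix x in F_n and compare its share 1/#(class(x) ∩ F_n) of the class ratio with its
    share #(C(x) ∩ F_n)/#F_n of the commuting probability.  Conjugating x by the words
    b of length at most M in the generators gives an orbit O, and the number of g in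
    F_n with x^g = x^b differs from #(C(x) ∩ F_n) by at most #(F_n b^-1 Δ F_n).  Either
    #O > M, and both shares are at most about 1/M; or O is the whole class, and the
    fibres of g ↦ x^g over O partition F_n, so #O · #(C(x) ∩ F_n) ≈ #F_n and the two
    shares agree.  This needs O ⊆ F_n, which fails only for few x because F is Følner on
    both sides.  Thus the two ratios differ by at most 1/M + o(1) for every M. *)

Section FsetCounting.
Variable T : choiceType.
Implicit Types (A B : {fset T}) (P : pred T).

Lemma count_sum_nat (U : Type) (a : pred U) (s : seq U) :
  count a s = \sum_(x <- s) a x.
Proof. by rewrite -sum1_count big_mkcond. Qed.

Lemma sum_nat_const_fset A n : \sum_(x <- A) n = #|` A| * n.
Proof. by rewrite big_const_seq count_predT iter_addn_0 mulnC. Qed.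

Lemma card_fset_sep A P : #|` [fset x in A | P x]| = count P A.
Proof. by rewrite card_fset_sum1 -big_fset_condE sum1_count. Qed.

Lemma count_le_symdiff P A B : count P A <= count P B + #|` symdiff A B|.
Proof.
rewrite -!card_fset_sep; apply: leq_trans (leq_card_fsetU _ _).
apply: fsubset_leq_card; apply/fsubsetP => x; rewrite !inE /= => /andP[xA Px].
by case xB: (x \in B); rewrite /= ?xA ?xB ?Px ?orbT.
Qed.

Lemma count_imfset (U : choiceType) (f : T -> U) (P : pred U) A :
  injective f -> count P [fset f x | x in A] = count (P \o f) A.
Proof.
move=> f_inj; rewrite ((permP (enum_imfset _ (in2W f_inj))) P) count_map.
by apply: eq_count.
Qed.

Lemma count_imfset_notin (f : T -> T) A :
  injective f -> count [pred x | f x \notin A] A <= #|` symdiff [fset f x | x in A] A|.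
Proof.
move=> f_inj; have := count_le_symdiff [pred x | x \notin A] [fset f x | x in A] A.
have -> : count [pred x | x \notin A] A = 0.
  by apply/eqP; rewrite -leqn0 leqNgt -has_count; apply/hasPn => x /= ->.
by rewrite count_imfset.
Qed.

Lemma count_comp_notin (f g : T -> T) A : injective f ->
  count [pred x | g (f x) \notin A] A <=
  count [pred x | f x \notin A] A + count [pred x | g x \notin A] A.
Proof.
move=> f_inj.
set Q := [pred x | g x \notin A].
apply: (@leq_trans (count [pred x | f x \notin A] A +
                    count [pred x | (f x \in A) && Q (f x)] A)).
  rewrite -count_predUI; apply: leq_trans (leq_addr _ _); apply: sub_count => x /=.
  by case: (f x \in A) => //= ->.
rewrite leq_add2l -(count_imfset [pred y | (y \in A) && Q y]) // -!card_fset_sep.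
by apply: fsubset_leq_card; apply/fsubsetP => y; rewrite !inE /= => /andP[_ /andP[-> ->]].
Qed.

Lemma sum_count_fiber (U : choiceType) (f : T -> U) (O : {fset U}) A :
  \sum_(y <- O) count [pred x | f x == y] A = count [pred x | f x \in O] A.
Proof.
under eq_bigr do rewrite -sum1_count big_mkcond.
rewrite exchange_big -sum1_count [RHS]big_mkcond /=; apply: eq_bigr => x _.
rewrite -big_mkcond sum1_count /= (eq_count (a2 := pred1 (f x))).
  by rewrite count_uniq_mem ?fset_uniq //; case: (_ \in _).
by move=> y /=; rewrite eq_sym.
Qed.

Lemma card_fsetX_rel (U : choiceType) (r : T -> U -> bool) A (B : {fset U}) :
  #|` [fset p in A `*` B | r p.1 p.2]| = \sum_(x <- A) count (r x) B.
Proof.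
under eq_bigr do rewrite -sum1_count.
rewrite pair_big_dep_cond card_fset_sum1; apply: eq_fbigl => -[x y].
rewrite !inE /=; apply/andP/idP => [[/andP[xA yB] rxy]|].
  by apply: in_imfset2; rewrite !inE /= ?xA ?yB.
case/(@imfset2P _ _ _ (fun _ => U)) => x' + [y' + [-> ->]].
by rewrite !inE /= andbT => xA /andP[yB ->]; rewrite xA yB.
Qed.

Lemma card_imfset_sum_inv (R : numFieldType) (U : choiceType) (f : T -> U) A :
  (#|` [fset f x | x in A]|%:R = \sum_(x <- A) (count [pred y | f y == f x] A)%:R^-1
   :> R)%R.
Proof.
rewrite (partition_big_imfset _ f) card_fset_sum1 natr_sum /=.
rewrite big_seq [RHS]big_seq; apply: eq_bigr => _ /imfsetP[x xA ->].
under eq_bigr => y /eqP fyx do rewrite fyx.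
rewrite big_const_seq iter_addr_0 -[RHS]mulr_natr -/(count _ _) mulVf //.
by rewrite pnatr_eq0 -lt0n -has_count; apply/hasP; exists x => /=.
Qed.
End FsetCounting.

Section RatioBounds.
Variable R : realFieldType.
Local Open Scope ring_scope.

Lemma le_ratio_inv_add (m c N D : R) : 0 < m -> 0 < N ->
  m * c <= N + m * D -> c / N <= m^-1 + D / N.
Proof.
move=> m0 N0 le_mc; rewrite ler_pdivrMr // mulrDl divfK ?gt_eqF //.
by rewrite -(ler_pM2l m0) mulrDr mulrA mulfV ?gt_eqF // mul1r.
Qed.

Lemma le_inv_ratio_add (m c N D : R) : 0 < m -> 0 < N ->
  N <= m * (c + D) -> m^-1 <= c / N + D / N.
Proof.
move=> m0 N0 le_N; rewrite -mulrDl ler_pdivlMr //.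
by rewrite -(ler_pM2l m0) mulrA mulfV ?gt_eqF // mul1r.
Qed.

Lemma dist_inv_ratio_le (M m k c N D : nat) : (0 < M)%N -> (0 < m <= k)%N ->
  (0 < N)%N -> (m * c <= N + m * D)%N -> (M < m \/ k = m /\ N <= m * (c + D))%N ->
  `|k%:R^-1 - c%:R / N%:R| <= M%:R^-1 + D%:R / N%:R :> R.
Proof.
move=> M0 /andP[m0 le_mk] N0 le_mc cases.
have [M0' m0' k0' N0'] :
    [/\ 0 < M%:R :> R, 0 < m%:R :> R, 0 < k%:R :> R & 0 < N%:R :> R].
  by split; rewrite ltr0n // (leq_trans m0).
have c0 : 0 <= c%:R / N%:R :> R by rewrite divr_ge0.
have D0 : 0 <= D%:R / N%:R :> R by rewrite divr_ge0.
have k_inv0 : 0 <= k%:R^-1 :> R by rewrite invr_ge0 ltW.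
have le_ratio : c%:R / N%:R <= m%:R^-1 + D%:R / N%:R :> R.
  by apply: le_ratio_inv_add => //; rewrite -!natrM -natrD ler_nat.
have le_km : k%:R^-1 <= m%:R^-1 :> R by rewrite lef_pV2 ?posrE // ler_nat.
rewrite ler_norml; case: cases => [lt_Mm | [-> le_N]].
  have le_mM : m%:R^-1 <= M%:R^-1 :> R by rewrite lef_pV2 ?posrE // ler_nat ltnW.
  apply/andP; split; lra.
have le_inv : m%:R^-1 <= c%:R / N%:R + D%:R / N%:R :> R.
  by apply: le_inv_ratio_add => //; rewrite -natrD -natrM ler_nat.
have M_inv0 : 0 <= M%:R^-1 :> R by rewrite invr_ge0 ltW.
apply/andP; split; lra.
Qed.

Lemma dist_inv_ratio_le1 (k c N : nat) : (0 < k)%N -> (0 < N)%N -> (c <= N)%N ->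
  `|k%:R^-1 - c%:R / N%:R| <= 1 :> R.
Proof.
move=> k0 N0 le_cN.
have c0 : 0 <= c%:R / N%:R :> R by rewrite divr_ge0.
have c1 : c%:R / N%:R <= 1 :> R by rewrite ler_pdivrMr ?ltr0n // mul1r ler_nat.
have k_inv0 : 0 <= k%:R^-1 :> R by rewrite invr_ge0.
have k_inv1 : k%:R^-1 <= 1 :> R by rewrite invf_le1 ?ltr0n // ler1n.
by rewrite ler_norml; apply/andP; split; lra.
Qed.

End RatioBounds.

Section ConjugacyCounting.
Variable G : groupType.
Implicit Types (x y g b : G) (F : {fset G}).
Local Open Scope group_scope.
Local Notation cls := (conj_class *%g (@monoid.inv G)).

Definition ltranslate g F := [fset g * y | y in F].
Definition rtranslate F g := [fset y * g | y in F].

Lemma count_conjg_notin b F :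
  count [pred x | x ^ b \notin F] F <=
  #|` symdiff (rtranslate F b) F| + #|` symdiff (ltranslate b^-1 F) F|.
Proof.
apply: leq_trans (@count_comp_notin _ ( *%g^~ b) ( *%g b^-1) F (mulIg b)) _.
by apply: leq_add; apply: count_imfset_notin; [apply: mulIg | apply: mulgI].
Qed.

Lemma conjg_eqE x g b : (x ^ g == x ^ b) = (x * (g / b) == g / b * x).
Proof.
rewrite -{1}(mulgVK b g) conjgM (inj_eq (conjg_inj b)).
by apply/eqP/eqP => [/conjg_fixP/commgP|/commgP/conjg_fixP].
Qed.

Lemma count_conjg_eq x b F :
  count [pred g | x ^ g == x ^ b] F = count [pred g | x * g == g * x] (rtranslate F b^-1).
Proof. by rewrite count_imfset; [apply: eq_count => g /=; rewrite conjg_eqE | apply: mulIg]. Qed.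

Lemma conj_class_eqP x y : cls y = cls x <-> exists g, y = x ^ g.
Proof.
split=> [eq_yx|[g ->]].
  have : cls y y by exists 1; rewrite ?mul1g ?invg1 ?mulg1.
  by rewrite eq_yx => -[g _ <-]; exists g^-1; rewrite conjgE invgK mulgA.
apply/seteqP; split=> _ [h _ <-].
  by exists (h / g) => //; rewrite invgM invgK conjgE !mulgA.
by exists (h * g) => //; rewrite invgM conjgE !mulgA !mulgK.
Qed.

Variable S : seq G.
Hypothesis S_gen : forall g, generated *%g (@monoid.inv G) 1 S g.

Fixpoint word_ball r : {fset G} :=
  if r is r'.+1 then word_ball r' `|` [fset b * s | b in word_ball r', s in S]
  else [fset 1].

Definition conj_orbit r x := [fset x ^ b | b in word_ball r].

Lemma word_ball1 r : 1 \in word_ball r.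
Proof. by elim: r => [|r IHr] /=; rewrite !inE ?IHr. Qed.

Lemma conj_orbit_self r x : x \in conj_orbit r x.
Proof. by apply/imfsetP; exists 1; rewrite ?word_ball1 ?conjg1. Qed.

Lemma conj_orbitS r x : conj_orbit r x `<=` conj_orbit r.+1 x.
Proof. by apply: subset_imfset; apply/fsubsetP; apply: fsubsetUl. Qed.

Lemma conj_orbit_step r x s y :
  s \in S -> y \in conj_orbit r x -> y ^ s \in conj_orbit r.+1 x.
Proof.
move=> sS /imfsetP[b bB ->]; apply/imfsetP; exists (b * s); last by rewrite conjgM.
by rewrite /= inE; apply/orP; right; apply/imfset2P; exists b => //; exists s.
Qed.

Lemma conj_orbit_stable r x : conj_orbit r x = conj_orbit r.+1 x ->
  forall g y, y \in conj_orbit r x -> y ^ g \in conj_orbit r x.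
Proof.
move=> eqO g; elim: (S_gen g) => {g} [y|s sS y|g _ IHg y|g h _ IHg _ IHh y].
- by rewrite conjg1.
- by move=> yO; rewrite eqO; apply: conj_orbit_step.
- have sub_gO : [fset z ^ g | z in conj_orbit r x] `<=` conj_orbit r x.
    by apply/fsubsetP => _ /imfsetP[z zO ->]; apply: IHg.
  have eq_gO : [fset z ^ g | z in conj_orbit r x] = conj_orbit r x.
    by apply/eqP; rewrite eqEfcard sub_gO /= [X in _ <= X]card_imfset //; apply: conjg_inj.
  by rewrite -{1}eq_gO => /imfsetP[z zO ->]; rewrite conjgK.
- by rewrite conjgM; move/IHg; apply: IHh.
Qed.

Lemma conj_orbit_large_or_class x r :
  r < #|` conj_orbit r x| \/ forall g, x ^ g \in conj_orbit r x.
Proof.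
elim: r => [|r [ltrO | clsO]].
- by left; rewrite cardfs_gt0; apply/fset0Pn; exists x; apply: conj_orbit_self.
- have [|leOr] := ltnP r.+1 #|` conj_orbit r.+1 x|; first by left.
  have eqO : conj_orbit r x = conj_orbit r.+1 x.
    by apply/eqP; rewrite eqEfcard conj_orbitS (leq_trans leOr).
  by right => g; rewrite -eqO; apply: conj_orbit_stable (conj_orbit_self r x).
- by right => g; apply: (fsubsetP (conj_orbitS r x)).
Qed.

Definition commute_count F x := count [pred g | x * g == g * x] F.
Definition class_count F x := count [pred y | cls y == cls x] F.
Definition translate_defect F r :=
  \sum_(b <- word_ball r) #|` symdiff (rtranslate F b^-1) F|.

Lemma conj_fiber_near F r x y : y \in conj_orbit r x ->
  count [pred g | x ^ g == y] F <= commute_count F x + translate_defect F r /\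
  commute_count F x <= count [pred g | x ^ g == y] F + translate_defect F r.
Proof.
case/imfsetP=> b bB ->; rewrite count_conjg_eq.
have le_sd_D : #|` symdiff (rtranslate F b^-1) F| <= translate_defect F r.
  by rewrite /translate_defect (big_fsetD1 b) //= leq_addr.
split.
  by apply: leq_trans (count_le_symdiff _ _ F) _; rewrite leq_add2l.
apply: leq_trans (count_le_symdiff _ _ (rtranslate F b^-1)) _.
by rewrite /symdiff fsetUC leq_add2l.
Qed.

Lemma orbit_commute_count_le F r x :
  #|` conj_orbit r x| * commute_count F x <=
  #|` F| + #|` conj_orbit r x| * translate_defect F r.
Proof.
rewrite -!sum_nat_const_fset; apply: (@leq_trans (\sum_(y <- conj_orbit r x)
  (count [pred g | (x ^ g)%g == y] F + translate_defect F r))).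
  by rewrite !big_seq; apply: leq_sum => y /(conj_fiber_near F) [].
by rewrite big_split leq_add2r sum_count_fiber count_size.
Qed.

Lemma card_le_orbit_commute_count F r x :
  (forall g, x ^ g \in conj_orbit r x) ->
  #|` F| <= #|` conj_orbit r x| * (commute_count F x + translate_defect F r).
Proof.
move=> clsO; have -> : #|` F| = count [pred g | x ^ g \in conj_orbit r x] F.
  by rewrite -[LHS]count_predT; apply: eq_count => g; rewrite /= clsO.
rewrite -sum_nat_const_fset -sum_count_fiber !big_seq; apply: leq_sum => y.
by case/(conj_fiber_near F).
Qed.

Lemma orbit_le_class_count F r x :
  conj_orbit r x `<=` F -> #|` conj_orbit r x| <= class_count F x.
Proof.
move=> OF; rewrite /class_count -card_fset_sep; apply: fsubset_leq_card.
apply/fsubsetP => y yO; rewrite !inE /= (fsubsetP OF) //.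
by case/imfsetP: yO => b _ ->; apply/eqP/conj_class_eqP; exists b.
Qed.

Lemma class_count_orbit F r x : conj_orbit r x `<=` F ->
  (forall g, x ^ g \in conj_orbit r x) -> class_count F x = #|` conj_orbit r x|.
Proof.
move=> OF clsO; apply/eqP; rewrite eqn_leq orbit_le_class_count // andbT.
rewrite /class_count -card_fset_sep; apply: fsubset_leq_card.
by apply/fsubsetP => y; rewrite !inE /= => /andP[_ /eqP/conj_class_eqP[g ->]]; apply: clsO.
Qed.

Lemma count_orbit_not_sub F r :
  count [pred x | ~~ (conj_orbit r x `<=` F)] F <=
  \sum_(b <- word_ball r)
    (#|` symdiff (rtranslate F b) F| + #|` symdiff (ltranslate b^-1 F) F|).
Proof.
apply: (@leq_trans (\sum_(b <- word_ball r) count [pred x | (x ^ b)%g \notin F] F));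
  last by apply: leq_sum => b _; apply: count_conjg_notin.
under [in leqRHS]eq_bigr do rewrite count_sum_nat.
rewrite count_sum_nat exchange_big /=; apply: leq_sum => x _.
case: (boolP (_ `<=` F)) => //= /fsubsetPn[_ /imfsetP[b bB ->] xbF].
by rewrite (big_fsetD1 b) //= xbF.
Qed.

Definition folner_defect F r := (translate_defect F r + \sum_(b <- word_ball r)
  (#|` symdiff (rtranslate F b) F| + #|` symdiff (ltranslate b^-1 F) F|))%N.

End ConjugacyCounting.

Section ConjugacyRatios.
Variables (R : realFieldType) (G : groupType) (S : seq G).
Hypothesis S_gen : forall g, generated *%g (@monoid.inv G) 1%g S g.
Implicit Types (x : G) (F : {fset G}).
Local Open Scope ring_scope.
Local Notation cls := (conj_class *%g (@monoid.inv G)).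

Lemma dist_class_commute_count_le F r x : x \in F -> (0 < r)%N ->
  `|(class_count F x)%:R^-1 - (commute_count F x)%:R / #|` F|%:R|
   <= r%:R^-1 + (translate_defect S F r)%:R / #|` F|%:R
      + (~~ (conj_orbit S r x `<=` F))%:R :> R.
Proof.
move=> xF r0; have F0 : (0 < #|` F|)%N by rewrite cardfs_gt0; apply/fset0Pn; exists x.
have [OF|] /= := boolP (conj_orbit S r x `<=` F); last first.
  move=> _; apply: le_trans (dist_inv_ratio_le1 _ _ _ _) _ => //.
  - by rewrite /class_count -has_count; apply/hasP; exists x => /=.
  - by rewrite /commute_count count_size.
  - by rewrite lerDr addr_ge0 ?divr_ge0 ?invr_ge0.
rewrite addr0; apply: (@dist_inv_ratio_le _ _ #|` conj_orbit S r x|) => //.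
- rewrite orbit_le_class_count // andbT cardfs_gt0; apply/fset0Pn.
  by exists x; apply: conj_orbit_self.
- exact: orbit_commute_count_le.
have [|clsO] := conj_orbit_large_or_class S_gen x r; first by left.
by right; split; [apply: class_count_orbit | apply: card_le_orbit_commute_count].
Qed.

Definition class_ratio F : R := #|` [fset cls x | x in F]|%:R / #|` F|%:R.

Definition commute_ratio F : R :=
  #|` [fset p in F `*` F | (p.1 * p.2 == p.2 * p.1)%g]|%:R / (#|` F|%:R * #|` F|%:R).

Lemma dist_class_commute_ratio_le F r : F != fset0 -> (0 < r)%N ->
  `|class_ratio F - commute_ratio F| <= r%:R^-1 + (folner_defect S F r)%:R / #|` F|%:R.
Proof.
move=> F0 r0; set N : R := #|` F|%:R.
have N0 : 0 < N by rewrite ltr0n cardfs_gt0.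
have -> : class_ratio F - commute_ratio F =
    (\sum_(x <- F) ((class_count F x)%:R^-1 - (commute_count F x)%:R / N)) / N.
  rewrite /class_ratio /commute_ratio card_imfset_sum_inv.
  rewrite (card_fsetX_rel (fun a b => a * b == b * a)%g).
  by rewrite -/N sumrB natr_sum mulrBl invfM mulrA -[in RHS]mulr_suml.
rewrite normrM normfV (gtr0_norm N0) ler_pdivrMr // mulrDl divfK ?gt_eqF //.
apply: le_trans (ler_norm_sum _ _ _) _.
apply: le_trans (_ : _ <= \sum_(x <- F) (r%:R^-1 + (translate_defect S F r)%:R / N
  + (~~ (conj_orbit S r x `<=` F))%:R)) _.
  by rewrite !big_seq; apply: ler_sum => x xF; apply: dist_class_commute_count_le.
rewrite big_split /= big_const_seq count_predT iter_addr_0 -[_ *+ _]mulr_natr -/N.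
rewrite mulrDl divfK ?gt_eqF // -natr_sum -count_sum_nat /folner_defect natrD addrA.
by rewrite lerD2l ler_nat count_orbit_not_sub.
Qed.

Lemma norm_class_ratio_le1 F : `|class_ratio F| <= 1.
Proof.
have [->|F0] := eqVneq F fset0; first by rewrite /class_ratio cardfs0 invr0 mulr0 normr0.
rewrite ger0_norm ?divr_ge0 // ler_pdivrMr ?ltr0n ?cardfs_gt0 // mul1r ler_nat.
exact: leq_imfset_card.
Qed.

Lemma norm_commute_ratio_le1 F : `|commute_ratio F| <= 1.
Proof.
have [->|F0] := eqVneq F fset0; first by rewrite /commute_ratio cardfs0 mulr0 invr0 mulr0 normr0.
rewrite ger0_norm ?divr_ge0 ?mulr_ge0 // ler_pdivrMr ?mulr_gt0 ?ltr0n ?cardfs_gt0 //.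
rewrite mul1r -natrM ler_nat (card_fsetX_rel (fun a b => a * b == b * a)%g).
by rewrite -sum_nat_const_fset leq_sum // => x _; apply: count_size.
Qed.

End ConjugacyRatios.

Section Limits.
Variable R : realType.
Local Open Scope classical_set_scope.
Local Open Scope ring_scope.

Lemma cvg0_sum_seq (I : Type) (s : seq I) (u : I -> R^nat) :
  (forall i, u i @ \oo --> 0) -> (fun n => \sum_(i <- s) u i n) @ \oo --> 0.
Proof.
move=> u0; have := cvg_big (x0 := 0) (r := s) add_continuous eventually_filter
  (fun i (_ : predT i) => u0 i).
by rewrite big1.
Qed.

Lemma cvg0_of_le_inv_add (u : R^nat) (E : nat -> R^nat) :
  (forall r, E r @ \oo --> 0) -> (forall r n, `|u n| <= r.+1%:R^-1 + E r n) ->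
  u @ \oo --> 0.
Proof.
move=> E0 le_u; apply/cvgr0Pnorm_lt => e e0.
have e20 : 0 < e / 2 by rewrite divr_gt0.
have [r _ /(_ r (leqnn r)) /= lt_r] := near_infty_natSinv_lt (PosNum e20).
apply: filterS ((cvgr0Pnorm_lt _).1 (E0 r) _ e20) => n /= lt_E.
by apply: le_lt_trans (le_u r n) _; rewrite [e]splitr ltrD // ltr_normlW.
Qed.

Lemma limn_sup_eq_of_sub_cvg0 (u v : R^nat) :
  bounded_fun u -> bounded_fun v -> (u - v) @ \oo --> 0 -> limn_sup u = limn_sup v.
Proof.
move=> bu bv uv0; have vu0 : (v - u) @ \oo --> 0.
  by rewrite -opprB -oppr0; apply: cvgN.
have le_sup w1 w2 : bounded_fun w1 -> bounded_fun w2 -> (w1 - w2) @ \oo --> 0 ->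
    limn_sup w1 <= limn_sup w2.
  move=> b1 b2 w0; have := le_limn_supD b2 (bounded_funD b1 (bounded_funN b2)).
  have -> : w2 \+ (w1 \+ - w2) = w1 by apply/funext => n /=; rewrite addrC subrK.
  by rewrite (cvg_limn_inf_sup w0).2 addr0.
by apply/eqP; rewrite eq_le !le_sup.
Qed.

Lemma bounded_fun_norm_le (u : R^nat) (M : R) :
  (forall n, `|u n| <= M) -> bounded_fun u.
Proof.
move=> le_uM; rewrite /bounded_near; near=> K => n _ /=.
by apply: le_trans (le_uM n) _; near: K; apply: nbhs_pinfty_ge; apply: num_real.
Unshelve. all: by end_near. Qed.

End Limits.

Section FolnerDefect.
Variables (R : realType) (G : groupType) (S : seq G) (F : nat -> {fset G}).
Hypotheses (F_left : left_Folner R *%g F) (F_right : right_Folner R *%g F).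
Local Open Scope classical_set_scope.
Local Open Scope ring_scope.

Lemma folner_defect_cvg0 r :
  (fun n => (folner_defect S (F n) r)%:R / #|` F n|%:R : R) @ \oo --> 0.
Proof.
under eq_fun => n.
  rewrite /folner_defect /translate_defect -big_split natr_sum mulr_suml.
  under eq_bigr do rewrite !natrD !mulrDl.
  over.
apply: cvg0_sum_seq => b.
have := cvgD (F_right b^-1%g) (cvgD (F_right b) (F_left b^-1%g)).
by rewrite !addr0; apply.
Qed.

End FolnerDefect.

Section GroupOfAxioms.
Variables (G : choiceType) (mul : G -> G -> G) (inv : G -> G) (e : G).
Hypothesis HG : is_group mul inv e.

Lemma is_group_mulV : right_inverse e inv mul.
Proof.
case: HG => mulA mul1 mulV x; rewrite -[mul x _]mul1 -[in LHS](mulV (inv x)) -mulA.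
by rewrite [mul (inv x) (mul x _)]mulA mulV mul1 mulV.
Qed.

Lemma is_group_mul1 : right_id e mul.
Proof. by case: HG => mulA mul1 mulV x; rewrite -(mulV x) mulA is_group_mulV mul1. Qed.

End GroupOfAxioms.

Definition group_of (G : choiceType) (mul : G -> G -> G) (inv : G -> G) (e : G)
  of is_group mul inv e : Type := G.

HB.instance Definition _ G mul inv e (HG : is_group mul inv e) :=
  Choice.on (@group_of G mul inv e HG).
HB.instance Definition _ G mul inv e (HG : is_group mul inv e) :=
  isGroup.Build (@group_of G mul inv e HG)
    (let: And3 mulA _ _ := HG in mulA) (let: And3 _ mul1 _ := HG in mul1)
    (is_group_mul1 HG) (let: And3 _ _ mulV := HG in mulV) (is_group_mulV HG).

Theorem cr_eq_dc (R : realType) (G : groupType) (S : seq G) (F : nat -> {fset G}) :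
  (forall g, generated *%g (@monoid.inv G) 1%g S g) -> (forall n, F n != fset0) ->
  left_Folner R *%g F -> right_Folner R *%g F ->
  cr R *%g (@monoid.inv G) F = dc R *%g F.
Proof.
move=> S_gen F0 F_left F_right.
apply: limn_sup_eq_of_sub_cvg0.
- by apply: (@bounded_fun_norm_le _ _ 1) => n; apply: norm_class_ratio_le1.
- by apply: (@bounded_fun_norm_le _ _ 1) => n; apply: norm_commute_ratio_le1.
apply: (@cvg0_of_le_inv_add _ _
  (fun r n => (folner_defect S (F n) r.+1)%:R / #|` F n|%:R)%R) => r.
  exact: folner_defect_cvg0.
by move=> n; apply: dist_class_commute_ratio_le.
Qed.

(* [{fset G}] and [{fset group_of HG}] are different types, since structures have no
   eta rule, so finite sets are transported explicitly. *)
Section GroupOfTransport.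
Variables (R : realType) (G : choiceType) (mul : G -> G -> G) (inv : G -> G) (e : G).
Hypothesis HG : is_group mul inv e.
Local Notation gT := (group_of HG).
Local Open Scope classical_set_scope.

Definition fset_group_of (A : {fset G}) : {fset gT} := [fset (x : gT) | x : G in A].

Lemma in_fset_group_of A (x : G) : (x \in fset_group_of A) = (x \in A).
Proof. exact: (mem_imfset _ _ (f := fun x : G => x : gT)). Qed.

Lemma card_fset_group_of A : #|` fset_group_of A| = #|` A|.
Proof. exact: card_imfset. Qed.

Lemma symdiff_group_of A B :
  symdiff (fset_group_of A) (fset_group_of B) = fset_group_of (symdiff A B).
Proof. by apply/fsetP => x; rewrite !inE !in_fset_group_of !inE. Qed.

Lemma imfset_group_of (f : G -> G) A :
  [fset (f y : gT) | y : gT in fset_group_of A] = fset_group_of [fset f y | y in A].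
Proof. by rewrite /fset_group_of -!imfset_comp. Qed.

Lemma generated_group_of S x :
  generated mul inv e S x -> generated *%g (@monoid.inv gT) 1%g S x.
Proof. by elim=> *; constructor. Qed.

Lemma left_Folner_group_of F :
  left_Folner R mul F -> left_Folner R *%g (fset_group_of \o F).
Proof.
move=> FL x /=; under eq_fun do
  rewrite (imfset_group_of (mul x)) symdiff_group_of !card_fset_group_of.
exact: FL.
Qed.

Lemma right_Folner_group_of F :
  right_Folner R mul F -> right_Folner R *%g (fset_group_of \o F).
Proof.
move=> FR x /=; under eq_fun do
  rewrite (imfset_group_of (mul^~ x)) symdiff_group_of !card_fset_group_of.
exact: FR.
Qed.

Lemma cr_group_of F : cr R mul inv F = cr R *%g (@monoid.inv gT) (fset_group_of \o F).
Proof.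
congr limn_sup; apply/funext => n /=.
by rewrite card_fset_group_of /fset_group_of -imfset_comp.
Qed.

Lemma dc_group_of F : dc R mul F = dc R *%g (fset_group_of \o F).
Proof.
congr limn_sup; apply/funext => n /=; rewrite card_fset_group_of.
rewrite (card_fsetX_rel (fun a b => mul a b == mul b a)).
rewrite (card_fsetX_rel (fun a b : gT => (a * b == b * a)%g)) big_imfset //=.
by congr (_%:R / _)%R; apply: eq_bigr => x _; rewrite count_imfset.
Qed.

End GroupOfTransport.

Theorem theorem1p21 (R : realType) (G : choiceType)
    (mul : G -> G -> G) (inv : G -> G) (e : G)
    (HG : is_group mul inv e)
    (Hfg : finitely_generated mul inv e)
    (Ham : amenable R mul)
    (F : nat -> {fset G})
    (HFne : forall n, F n != fset0)
    (HFl : left_Folner R mul F)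
    (HFr : right_Folner R mul F) :
  cr R mul inv F = dc R mul F.
Proof.
(* [Ham] is redundant: [F] itself is a left Følner sequence. *)
case: Hfg => S S_gen; rewrite (cr_group_of R HG) (dc_group_of R HG).
apply: (@cr_eq_dc R (group_of HG) S).
- by move=> x; apply: generated_group_of.
- by move=> n; rewrite /= -cardfs_gt0 card_fset_group_of cardfs_gt0.
- exact: left_Folner_group_of.
- exact: right_Folner_group_of.
Qed.
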